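(* Let $\sigma : \mathcal{S} \to !A^\perp \parallel !B$ be a negative deterministic sequential innocent $\sim$-strategy, and let $s, s' \in S$ be such that $|[s]| = |[s']|$. Then the following are equivalent: (1) $\mathcal{P}(s) = \mathcal{P}(s')$; (2) the unique order-isomorphism $\theta : [s] \cong [s']$ is in the isomorphism family of $\mathcal{S}$; (3) the unique order-isomorphism $\theta : [s] \cong [s']$ is such that $\sigma\,\theta$ is in the isomorphism family of $!A^\perp \parallel !B$.
   Context: $e \rightarrow e'$ denotes immediate causal dependency ($e<e'$ with nothing strictly between). $A,B$ are negative arenas (countable forest-shaped, conflict-free, alternating esps with negative minimal events), and $!A$ is the tcg of index functions $\alpha:[a]\to\omega$ whose symmetry consists of the label-preserving order-isomorphisms between configurations; $\mathrm{lbl}\,\alpha=a$. A $\sim$-strategy is a map of essps which is courteous (if $s_1 \rightarrow s_2$ with $\mathrm{pol}(s_1)=+$ or $\mathrm{pol}(s_2)=-$ then $\sigma s_1 \rightarrow \sigma s_2$), strong-receptive and thin; negative means minimal events of $S$ are negative. Sequential innocent: backward sequential ($[s]$ totally ordered) and forward sequential (if $s \rightarrow s_1$, $s \rightarrow s_2$ with $s_1,s_2$ positive, then $[s_1]\cup[s_2]$ is not a configuration). Deterministic: every finite subset of $S$ is consistent. For $s\in S$ with $[s]$ the chain $s_0 \rightarrow s_1 \rightarrow\dots\rightarrow s_n=s$, $\mathcal{P}(s)$ is the pointing sequence $(\mathrm{lbl}(\sigma s_0),\dots,\mathrm{lbl}(\sigma s_n))$ in which $\mathrm{lbl}(\sigma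 s_i)$ points to $\mathrm{lbl}(\sigma s_j)$ if $\sigma s_j \rightarrow \sigma s_i$, or if $j=0$ and $\sigma s_i$ is minimal in $!A$. *)

From Stdlib Require Import List Arith.
Import ListNotations.
Set Implicit Arguments.

(** * Event structures with polarity (esp) *)

Inductive pol := Pos | Neg.

Definition flip (p : pol) : pol := match p with Pos => Neg | Neg => Pos end.

(** Data of an event structure with polarity: events, causal order,
    consistency (on finite sets, represented by lists), polarity. *)
Record esp := Esp {
  ev  : Type;
  le  : ev -> ev -> Prop;
  con : list ev -> Prop;
  pl  : ev -> pol
}.

Definition lt (E : esp) (a b : ev E) : Prop := le E a b /\ a <> b.

Definition imm (E : esp) (a b : ev E) : Prop :=
  lt E a b /\ ~ (exists c, lt E a c /\ lt E c b).

Definition minimal (E : esp) (a : ev E) : Prop :=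
  forall b, le E b a -> b = a.

Definition is_es (E : esp) : Prop :=
  (forall a, le E a a) /\
  (forall a b c, le E a b -> le E b c -> le E a c) /\
  (forall a b, le E a b -> le E b a -> a = b) /\
  (forall a, exists l, forall b, In b l <-> le E b a) /\
  (forall a, con E [a]) /\
  (forall X Y, con E X -> incl Y X -> con E Y) /\
  (forall X a b, con E X -> In b X -> le E a b -> con E (a :: X)).

Definition finite_set (X : Type) (x : X -> Prop) : Prop :=
  exists l, forall e, x e <-> In e l.

Definition config (E : esp) (x : ev E -> Prop) : Prop :=
  finite_set x /\
  (forall a b, x b -> le E a b -> x a) /\
  (forall l, (forall e, In e l -> x e) -> con E l).

(** the prime configuration [a] *)
Definition cause (E : esp) (a : ev E) : ev E -> Prop := fun b => le E b a.

Definition set_bij (X Y : Type) (th : X -> Y -> Prop) (x : X -> Prop) (y : Y -> Prop)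
  : Prop :=
  (forall a b, th a b -> x a /\ y b) /\
  (forall a, x a -> exists b, th a b) /\
  (forall b, y b -> exists a, th a b) /\
  (forall a b b', th a b -> th a b' -> b = b') /\
  (forall a a' b, th a b -> th a' b -> a = a').

Definition bij (E : esp) (th : ev E -> ev E -> Prop) (x y : ev E -> Prop) : Prop :=
  config E x /\ config E y /\ set_bij th x y.

Definition order_iso (E : esp) (th : ev E -> ev E -> Prop) (x y : ev E -> Prop)
  : Prop :=
  set_bij th x y /\
  (forall a a' b b', th a b -> th a' b' -> (le E a a' <-> le E b b')).

Definition rel_id (X : Type) (x : X -> Prop) : X -> X -> Prop :=
  fun a b => x a /\ a = b.

Definition rel_inv (X : Type) (th : X -> X -> Prop) : X -> X -> Prop :=
  fun a b => th b a.

Definition rel_comp (X : Type) (th ph : X -> X -> Prop) : X -> X -> Prop :=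
  fun a c => exists b, th a b /\ ph b c.

Definition rel_incl (X Y : Type) (th ph : X -> Y -> Prop) : Prop :=
  forall a b, th a b -> ph a b.

Definition rel_eq (X Y : Type) (th ph : X -> Y -> Prop) : Prop :=
  forall a b, th a b <-> ph a b.

Definition img (X Y : Type) (f : X -> Y) (th : X -> X -> Prop) : Y -> Y -> Prop :=
  fun c d => exists a b, th a b /\ f a = c /\ f b = d.

Definition dom (X Y : Type) (th : X -> Y -> Prop) : X -> Prop :=
  fun a => exists b, th a b.

(** * Event structures with symmetry and polarity (essp) *)

Record essp := Essp {
  esp_of : esp;
  iso : (ev esp_of -> ev esp_of -> Prop) -> Prop
}.

Definition sev (S : essp) := ev (esp_of S).

Definition is_iso_family (E : esp) (I : (ev E -> ev E -> Prop) -> Prop) : Prop :=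
  (forall th, I th -> exists x y, bij E th x y) /\
  (forall x, config E x -> I (rel_id x)) /\
  (forall th, I th -> I (rel_inv th)) /\
  (forall th ph, I th -> I ph -> I (rel_comp th ph)) /\
  (forall th x y x', I th -> bij E th x y -> config E x' ->
     (forall a, x' a -> x a) -> I (fun a b => th a b /\ x' a)) /\
  (forall th x y x', I th -> bij E th x y -> config E x' ->
     (forall a, x a -> x' a) ->
     exists th', I th' /\ rel_incl th th' /\ (forall a, dom th' a <-> x' a)).

Definition is_essp (S : essp) : Prop :=
  is_es (esp_of S) /\ @is_iso_family (esp_of S) (iso S) /\
  (forall th a b, iso S th -> th a b -> pl _ a = pl _ b).

(** * Arenas and the game !A^perp || !B *)

Definition is_arena (A : esp) : Prop :=
  is_es A /\
  (exists f : ev A -> nat, forall a b, f a = f b -> a = b) /\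
  (forall a1 a2 a, le A a1 a -> le A a2 a -> le A a1 a2 \/ le A a2 a1) /\
  (forall X, con A X) /\
  (forall a b, imm A a b -> pl A a <> pl A b) /\
  (forall a, minimal A a -> pl A a = Neg).

(** events of !A : index functions alpha : [a] -> omega *)
Definition bang_ev (A : esp) : Type :=
  { a : ev A & forall a' : ev A, le A a' a -> nat }.

Definition lbl (A : esp) (al : bang_ev A) : ev A := projT1 al.

(** inclusion of index functions (as graphs) *)
Definition bang_le (A : esp) (al be : bang_ev A) : Prop :=
  le A (lbl al) (lbl be) /\
  (forall a' (h1 : le A a' (lbl al)) (h2 : le A a' (lbl be)),
      projT2 al a' h1 = projT2 be a' h2).

Definition bang_esp (A : esp) : esp :=
  Esp (@bang_le A) (fun X => con A (map (@lbl A) X)) (fun al => pl A (lbl al)).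

Definition bang (A : esp) : essp :=
  Essp (bang_esp A)
    (fun th => exists x y, bij (bang_esp A) th x y /\
       (forall al be, th al be -> lbl al = lbl be) /\
       (forall al al' be be', th al be -> th al' be' ->
          (bang_le al al' <-> bang_le be be'))).

Definition dual (G : essp) : essp :=
  Essp (Esp (le (esp_of G)) (con (esp_of G)) (fun a => flip (pl _ a))) (iso G).

Definition par_le (G H : esp) (a b : ev G + ev H) : Prop :=
  match a, b with
  | inl a, inl b => le G a b
  | inr a, inr b => le H a b
  | _, _ => False
  end.

Definition lefts (X Y : Type) (l : list (X + Y)) : list X :=
  flat_map (fun e => match e with inl a => [a] | inr _ => [] end) l.
Definition rights (X Y : Type) (l : list (X + Y)) : list Y :=
  flat_map (fun e => match e with inl _ => [] | inr b => [b] end) l.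

Definition par_esp (G H : esp) : esp :=
  Esp (@par_le G H)
      (fun X => con G (lefts X) /\ con H (rights X))
      (fun e => match e with inl a => pl G a | inr b => pl H b end).

Definition par (G H : essp) : essp :=
  Essp (par_esp (esp_of G) (esp_of H))
    (fun th =>
       (forall a b, th a b ->
          match a, b with inl _, inl _ => True | inr _, inr _ => True | _, _ => False end) /\
       iso G (fun a b => th (inl a) (inl b)) /\
       iso H (fun a b => th (inr a) (inr b))).

Definition game (A B : esp) : essp := par (dual (bang A)) (bang B).

Definition game_lbl (A B : esp) (e : sev (game A B)) : ev A + ev B :=
  match e with inl al => inl (lbl al) | inr be => inr (lbl be) end.

(** * Strategies *)

Definition essp_map (S G : essp) (f : sev S -> sev G) : Prop :=
  (forall x, config _ x -> config _ (fun c => exists a, x a /\ f a = c)) /\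
  (forall x a b, config _ x -> x a -> x b -> f a = f b -> a = b) /\
  (forall a, pl _ (f a) = pl _ a) /\
  (forall th, iso S th -> iso G (img f th)).

Definition courteous (S G : essp) (f : sev S -> sev G) : Prop :=
  forall s1 s2, imm _ s1 s2 -> pl _ s1 = Pos \/ pl _ s2 = Neg ->
    imm _ (f s1) (f s2).

Definition ext_pol (E : esp) (p : pol) (th ph : ev E -> ev E -> Prop) : Prop :=
  rel_incl th ph /\ (forall a b, ph a b -> ~ th a b -> pl E a = p).

Definition strong_receptive (S G : essp) (f : sev S -> sev G) : Prop :=
  forall th ps, iso S th -> iso G ps -> ext_pol _ Neg (img f th) ps ->
    (exists th', iso S th' /\ rel_incl th th' /\ rel_eq (img f th') ps) /\
    (forall th' th'', iso S th' -> rel_incl th th' -> rel_eq (img f th') ps ->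
                      iso S th'' -> rel_incl th th'' -> rel_eq (img f th'') ps ->
                      rel_eq th' th'').

Definition thin (S : essp) : Prop :=
  forall x th, config _ x -> iso S th -> ext_pol _ Pos (rel_id x) th ->
    forall a b, th a b -> a = b.

Definition strategy (S G : essp) (f : sev S -> sev G) : Prop :=
  @essp_map S G f /\ @courteous S G f /\ @strong_receptive S G f /\ thin S.

Definition negative (S : essp) : Prop :=
  forall s : sev S, minimal _ s -> pl _ s = Neg.

Definition deterministic (S : essp) : Prop :=
  forall X : list (sev S), con _ X.

Definition backward_sequential (S : essp) : Prop :=
  forall s s1 s2 : sev S, le _ s1 s -> le _ s2 s -> le _ s1 s2 \/ le _ s2 s1.

Definition forward_sequential (S : essp) : Prop :=
  forall s s1 s2 : sev S, imm _ s s1 -> imm _ s s2 -> pl _ s1 = Pos -> pl _ s2 = Pos ->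
    s1 <> s2 -> ~ config _ (fun e => le _ e s1 \/ le _ e s2).

Definition sequential_innocent (S : essp) : Prop :=
  backward_sequential S /\ forward_sequential S.

Definition cause_card (S : essp) (s : sev S) (n : nat) : Prop :=
  exists l, NoDup l /\ length l = n /\ forall e, In e l <-> le _ e s.

Definition chain (S : essp) (s : sev S) (n : nat) (c : nat -> sev S) : Prop :=
  c n = s /\ (forall i, i < n -> imm _ (c i) (c (Datatypes.S i))) /\
  (forall e, le _ e s <-> exists i, i <= n /\ c i = e).

(** pointer from position i to position j *)
Definition points (A B : esp) (S : essp) (f : sev S -> sev (game A B))
  (c : nat -> sev S) (i j : nat) : Prop :=
  imm _ (f (c j)) (f (c i)) \/
  (j = 0 /\ exists al, f (c i) = inl al /\ minimal (esp_of (dual (bang A))) al).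

(** pointing sequences: a list of labels together with a pointer relation *)
Definition pseq (A B : esp) : Type := (list (ev A + ev B) * (nat -> nat -> Prop))%type.

Definition pointing_seq (A B : esp) (S : essp) (f : sev S -> sev (game A B))
  (s : sev S) (p : pseq A B) : Prop :=
  exists n c, @chain S s n c /\
    fst p = map (fun i => game_lbl (f (c i))) (seq 0 (Datatypes.S n)) /\
    (forall i j, snd p i j <-> (i <= n /\ j <= n /\ @points A B S f c i j)).

(* By backward sequentiality [s] and [s'] are chains c_0 -> ... -> c_n and c'_0 -> ... -> c'_n,
   and theta maps c_i to c'_i.  All three conditions are equivalent to: sigma c_i and sigma c'_i
   carry the same labels, and the immediate causal links among the sigma c_i are those among the
   sigma c'_i.  For (1) this holds because the pointers are exactly these links, plus the pointers
   of initial moves, which labels determine; for (3) because the game order on the image of a chain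
   is generated by its immediate links.  Conversely, from matching links theta is built in the
   isomorphism family one prefix of the chain at a time: a negative step is given by strong
   receptivity, a positive one by the extension axiom, forward sequentiality forcing the extension
   to send c_k to c'_k. *)

From Stdlib Require Import List Arith Lia Relations Classical
  FunctionalExtensionality PropExtensionality ProofIrrelevance.
Import ListNotations.

Lemma nat_bounded_max (P : nat -> Prop) i j : P j -> j <= i ->
  exists m, P m /\ m <= i /\ forall q, P q -> q <= i -> q <= m.
Proof.
  induction i as [|i IH]; intros Pj Hji.
  - exists 0. repeat split; [replace 0 with j by lia; exact Pj|lia|intros; lia].
  - destruct (classic (P (S i))) as [PSi|nPSi].
    + exists (S i). repeat split; auto.
    + assert (Hj : j <= i) by (destruct (Nat.eq_dec j (S i)); [subst; contradiction|lia]).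
      destruct (IH Pj Hj) as [m [Pm [Hm Hmax]]]. exists m. repeat split; [exact Pm|lia|].
      intros q Pq Hq. destruct (Nat.eq_dec q (S i)); [subst; contradiction|]. apply Hmax; auto; lia.
Qed.

Lemma list_total_max {T : Type} (R : T -> T -> Prop) :
  (forall a, R a a) -> (forall a b c, R a b -> R b c -> R a c) ->
  forall l, l <> [] -> (forall x y, In x l -> In y l -> R x y \/ R y x) ->
  exists m, In m l /\ forall e, In e l -> R e m.
Proof.
  intros Hrefl Htrans. induction l as [|a l IH]; intros Hne Htot; [congruence|].
  destruct l as [|b l'].
  - exists a. split; [now left|]. intros e [<-|[]]. apply Hrefl.
  - destruct IH as [m [Hm Hmax]]; [congruence|intros; apply Htot; right; auto|].
    destruct (Htot a m (or_introl eq_refl) (or_intror Hm)) as [Ham|Hma].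
    + exists m. split; [now right|]. intros e [<-|He]; auto.
    + exists a. split; [now left|]. intros e [<-|He]; [apply Hrefl|eauto].
Qed.

Lemma rel_eq_transport {X Y : Type} (P : (X -> Y -> Prop) -> Prop) {t t' : X -> Y -> Prop} :
  P t -> rel_eq t t' -> P t'.
Proof.
  intros Ht Heq. replace t' with t; [exact Ht|].
  apply functional_extensionality; intro a. apply functional_extensionality; intro b.
  apply propositional_extensionality. apply Heq.
Qed.

Lemma es_le_refl {E : esp} : is_es E -> forall a, le E a a.
Proof. intros [h _]. exact h. Qed.

Lemma es_le_trans {E : esp} : is_es E -> forall a b c, le E a b -> le E b c -> le E a c.
Proof. intros [_ [h _]]. exact h. Qed.

Lemma es_le_antisym {E : esp} : is_es E -> forall a b, le E a b -> le E b a -> a = b.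
Proof. intros [_ [_ [h _]]]. exact h. Qed.

Lemma es_cause_finite {E : esp} : is_es E -> forall a, exists l, forall b, In b l <-> le E b a.
Proof. intros [_ [_ [_ [h _]]]]. exact h. Qed.

Section Chains.
Context {T : essp}.
Hypothesis HS : is_es (esp_of T).
Notation E := (esp_of T).

Lemma chain_le {s n c} : chain T s n c -> forall i j, i <= j -> j <= n -> le E (c i) (c j).
Proof.
  intros [_ [Himm _]] i j Hij. induction Hij as [|j Hij IH]; intros Hn.
  - apply es_le_refl, HS.
  - apply (es_le_trans HS _ (c j)); [apply IH; lia|]. apply (Himm j); lia.
Qed.

Lemma chain_le_iff {s n c} : chain T s n c -> forall i j, i <= n -> j <= n ->
  (le E (c i) (c j) <-> i <= j).
Proof.
  intros Hc i j Hi Hj. split; [|intro; apply (chain_le Hc); auto].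
  intro Hle. destruct (le_lt_dec i j) as [|Hji]; auto. exfalso.
  destruct i as [|i]; [lia|].
  pose proof Hc as [_ [Himm _]]. destruct (Himm i ltac:(lia)) as [[_ Hne] _].
  apply Hne, (es_le_antisym HS); [apply (chain_le Hc); lia|].
  apply (es_le_trans HS _ (c j)); [exact Hle|apply (chain_le Hc); lia].
Qed.

Lemma chain_inj {s n c} : chain T s n c -> forall i j, i <= n -> j <= n -> c i = c j -> i = j.
Proof.
  intros Hc i j Hi Hj Heq.
  assert (i <= j) by (apply (chain_le_iff Hc); auto; rewrite Heq; apply es_le_refl, HS).
  assert (j <= i) by (apply (chain_le_iff Hc); auto; rewrite Heq; apply es_le_refl, HS).
  lia.
Qed.

Lemma chain_le_top {s n c} : chain T s n c -> forall i, i <= n -> le E (c i) s.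
Proof. intros [_ [_ Hcause]] i Hi. apply Hcause. eauto. Qed.

Lemma chain_cause {s n c} : chain T s n c -> forall k e, k <= n ->
  (le E e (c k) <-> exists j, j <= k /\ c j = e).
Proof.
  intros Hc k e Hk. split.
  - intro Hle. pose proof Hc as [_ [_ Hcause]].
    destruct (proj1 (Hcause e)) as [j [Hj <-]].
    { apply (es_le_trans HS _ (c k)); [exact Hle|apply (chain_le_top Hc k Hk)]. }
    exists j. split; auto. apply (chain_le_iff Hc) in Hle; auto.
  - intros [j [Hj <-]]. apply (chain_le Hc); auto.
Qed.

Lemma chain_order_iso {s s' n c c'} (th : sev T -> sev T -> Prop) :
  chain T s n c -> chain T s' n c' -> order_iso E th (cause E s) (cause E s') ->
  forall i, i <= n -> th (c i) (c' i).
Proof.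
  intros Hc Hc' [[Hdom [Hl [Hr [Hfun Hinj]]]] Hord].
  pose proof Hc as [_ [_ Hcause]]. pose proof Hc' as [_ [_ Hcause']].
  induction i as [i IH] using lt_wf_ind. intros Hi.
  destruct (Hl (c i)) as [b Hb]; [apply (chain_le_top Hc i Hi)|].
  destruct (proj1 (Hcause' b) (proj2 (Hdom _ _ Hb))) as [m [Hm <-]].
  destruct (Hr (c' i)) as [a Ha]; [apply (chain_le_top Hc' i Hi)|].
  destruct (proj1 (Hcause a) (proj1 (Hdom _ _ Ha))) as [j [Hj <-]].
  assert (i <= m).
  { destruct (le_lt_dec i m) as [|Hmi]; auto. exfalso.
    pose proof (Hinj _ _ _ Hb (IH m Hmi ltac:(lia))) as Heq.
    apply (chain_inj Hc) in Heq; lia. }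
  assert (i <= j).
  { destruct (le_lt_dec i j) as [|Hji]; auto. exfalso.
    pose proof (Hfun _ _ _ Ha (IH j Hji ltac:(lia))) as Heq.
    apply (chain_inj Hc') in Heq; lia. }
  assert (m <= i).
  { apply (chain_le_iff Hc'); auto. apply (Hord _ _ _ _ Hb Ha).
    apply (chain_le_iff Hc); auto. }
  replace m with i in Hb by lia. exact Hb.
Qed.

Lemma chain_snoc {m n c} (s : sev T) : chain T m n c -> imm E m s ->
  (forall e, le E e s <-> le E e m \/ e = s) ->
  chain T s (S n) (fun i => if i =? S n then s else c i).
Proof.
  intros [Hcn [Himm Hcause]] Hms Hs. cbn beta.
  split; [now rewrite Nat.eqb_refl|split].
  - intros i Hi. destruct (Nat.eqb_spec i (S n)) as [|_]; [lia|].
    destruct (Nat.eqb_spec (S i) (S n)) as [Heq|Hne].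
    + replace i with n by lia. now rewrite Hcn.
    + apply Himm; lia.
  - intro e. rewrite Hs, Hcause. split.
    + intros [[i [Hi <-]]|Hes].
      * exists i. destruct (Nat.eqb_spec i (S n)); [lia|auto].
      * exists (S n). now rewrite Nat.eqb_refl.
    + intros [i [Hi <-]]. destruct (Nat.eqb_spec i (S n)) as [|Hin]; [now right|].
      left. exists i. split; [lia|reflexivity].
Qed.

Lemma chain_exists : backward_sequential T ->
  forall n s, cause_card T s (S n) -> exists c, chain T s n c.
Proof.
  intros Hbs. induction n as [|n IH]; intros s [l [Hnd [Hlen Hl]]].
  - exists (fun _ => s). split; [reflexivity|split; [intros; lia|]].
    destruct l as [|x [|y l]]; simpl in Hlen; try lia.
    assert (x = s) as <- by (destruct (proj2 (Hl s) (es_le_refl HS s)) as [|[]]; auto).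
    intro e. rewrite <- Hl. split; [intros [<-|[]]; exists 0; auto|intros [i [_ <-]]; now left].
  - destruct (in_split s l) as [l1 [l2 ->]]; [apply Hl, es_le_refl, HS|].
    set (rest := l1 ++ l2).
    assert (Hrest : forall e, In e rest <-> le E e s /\ e <> s).
    { intro e. unfold rest. rewrite <- Hl, !in_app_iff. simpl. split.
      - intros He. split; [tauto|]. intros ->. apply (NoDup_remove_2 _ _ _ Hnd).
        now apply in_app_iff.
      - intros [He Hne]. destruct He as [|[Heq|]]; auto. congruence. }
    destruct (list_total_max (le E) (es_le_refl HS) (es_le_trans HS) rest) as [m [Hm Hmax]].
    { intros Hnil. assert (length rest = 0) by now rewrite Hnil.
      unfold rest in *. rewrite length_app in *. simpl in Hlen. lia. }
    { intros x y Hx Hy. apply Hrest in Hx, Hy. eapply Hbs; [apply Hx|apply Hy]. }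
    apply Hrest in Hm as [Hms Hmne].
    assert (Hcause_m : forall e, In e rest <-> le E e m).
    { intro e. split; [apply Hmax|]. intro Hem. apply Hrest. split.
      - apply (es_le_trans HS _ m); auto.
      - intros ->. apply Hmne, (es_le_antisym HS); auto. }
    destruct (IH m) as [c Hc].
    { exists rest. split; [apply (NoDup_remove_1 _ _ _ Hnd)|split; [|exact Hcause_m]].
      unfold rest. rewrite length_app in *. simpl in Hlen. lia. }
    exists (fun i => if i =? S n then s else c i). apply (chain_snoc s Hc).
    + split; [split; auto|]. intros [w [[Hmw Hmw'] [Hws Hws']]].
      apply Hmw', (es_le_antisym HS); auto. apply Hcause_m, Hrest. auto.
    + intro e. rewrite <- Hcause_m, Hrest. destruct (classic (e = s)) as [->|Hne].
      * split; [now right|intros _; apply es_le_refl, HS].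
      * tauto.
Qed.

Lemma cause_card_succ {s n} : cause_card T s n -> exists m, n = S m.
Proof.
  intros [l [_ [Hlen Hl]]]. destruct l as [|x l]; [|simpl in Hlen; eauto].
  exfalso. apply (proj2 (Hl s)), es_le_refl, HS.
Qed.

End Chains.

Section IsoFamily.
Context {T : essp}.
Hypothesis HT : is_essp T.
Hypothesis Hdet : deterministic T.
Notation E := (esp_of T).

Lemma config_of_down_closed (x : sev T -> Prop) : finite_set x ->
  (forall a b, x b -> le E a b -> x a) -> config E x.
Proof. intros Hfin Hdown. split; [exact Hfin|split; [exact Hdown|intros; apply Hdet]]. Qed.

Lemma config_cause e : config E (cause E e).
Proof.
  apply config_of_down_closed.
  - destruct (es_cause_finite (proj1 HT) e) as [l Hl]. exists l. intro b. now rewrite Hl.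
  - intros a b Hb Hab. apply (es_le_trans (proj1 HT) _ b); auto.
Qed.

Lemma config_union {x y : sev T -> Prop} : config E x -> config E y ->
  config E (fun e => x e \/ y e).
Proof.
  intros [[lx Hx] [Dx _]] [[ly Hy] [Dy _]]. apply config_of_down_closed.
  - exists (lx ++ ly). intro e. rewrite in_app_iff, <- Hx, <- Hy. tauto.
  - intros a b [Hb|Hb] Hab; [left; eapply Dx|right; eapply Dy]; eauto.
Qed.

Lemma iso_empty : iso T (fun _ _ => False).
Proof.
  destruct HT as [_ [[_ [Hid _]] _]].
  apply (rel_eq_transport (iso T) (t := rel_id (fun _ : sev T => False))).
  - apply Hid, config_of_down_closed; [exists []; intro; simpl; tauto|intros; auto].
  - intros a b. unfold rel_id. tauto.
Qed.

Lemma iso_le {th : sev T -> sev T -> Prop} : iso T th ->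
  forall a b a' b', th a b -> th a' b' -> le E a' a -> le E b' b.
Proof.
  intros Hth a b a' b' Hab Hab' Ha'a.
  destruct HT as [HE [[Hbij [_ [Hinv [_ [Hres _]]]]] _]].
  destruct (Hbij _ (Hinv _ Hth)) as [y [x [Cy [Cx Hyx]]]].
  assert (Hsub : forall p, cause E b p -> y p).
  { intros p Hp. destruct Cy as [_ [Dy _]]. apply (Dy p b); auto. apply (proj1 Hyx b a Hab). }
  pose proof (Hres _ y x (cause E b) (Hinv _ Hth) (conj Cy (conj Cx Hyx)) (config_cause b) Hsub)
    as Hrestr.
  destruct (Hbij _ Hrestr) as [yb [xb [_ [[_ [Dxb _]] [Hdom [_ [Hsurj _]]]]]]].
  assert (xb a) by (apply (Hdom b a); split; [exact Hab|apply (es_le_refl HE)]).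
  destruct (Hsurj a') as [p [Hpa' Hpb]]; [apply (Dxb a' a); auto|].
  destruct (Hbij _ Hth) as [_ [_ [_ [_ [_ [_ [_ [Hfun _]]]]]]]].
  rewrite (Hfun a' b' p Hab' Hpa'). exact Hpb.
Qed.

Lemma iso_pol (th : sev T -> sev T -> Prop) a b : iso T th -> th a b -> pl E a = pl E b.
Proof. destruct HT as [_ [_ h]]. apply h. Qed.

End IsoFamily.

Section Game.
Context {A B : esp}.
Hypothesis HA : is_arena A.
Hypothesis HB : is_arena B.
Notation G := (esp_of (game A B)).

Lemma bang_le_refl {X : esp} : is_es X -> forall al : bang_ev X, bang_le al al.
Proof.
  intros HX al. split; [apply (es_le_refl HX)|]. intros; f_equal; apply proof_irrelevance.
Qed.

Lemma bang_le_trans {X : esp} : is_es X -> forall al be ga : bang_ev X,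
  bang_le al be -> bang_le be ga -> bang_le al ga.
Proof.
  intros HX al be ga [Hab Eab] [Hbg Ebg]. split; [apply (es_le_trans HX _ _ _ Hab Hbg)|].
  intros a' h1 h3. rewrite (Eab a' h1 (es_le_trans HX _ _ _ h1 Hab)). apply Ebg.
Qed.

Lemma bang_minimal_iff {X : esp} : is_es X -> forall al : bang_ev X,
  minimal (bang_esp X) al <-> minimal X (lbl al).
Proof.
  intros HX [a fa]. unfold lbl; simpl. split.
  - intros Hmin b Hba.
    set (be := existT (fun b => forall a', le X a' b -> nat) b
                 (fun a' h => fa a' (es_le_trans HX _ _ _ h Hba))).
    assert (Hbe : bang_le be (existT _ a fa)).
    { split; [exact Hba|]. intros a' h1 h2. simpl. f_equal. apply proof_irrelevance. }
    exact (f_equal (@lbl X) (Hmin be Hbe)).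
  - intros Hmin [b fb] [Hba Efb]. simpl in *. pose proof (Hmin b Hba) as <-.
    f_equal. apply functional_extensionality_dep; intro a'.
    apply functional_extensionality; intro h. apply Efb.
Qed.

Lemma game_le_refl (d : sev (game A B)) : le G d d.
Proof. destruct d; apply bang_le_refl; [apply HA|apply HB]. Qed.

Lemma game_le_trans (d1 d2 d3 : sev (game A B)) : le G d1 d2 -> le G d2 d3 -> le G d1 d3.
Proof. destruct d1, d2, d3; simpl; try tauto; apply bang_le_trans; [apply HA|apply HB]. Qed.

Lemma pl_game_lbl (d d' : sev (game A B)) : game_lbl d = game_lbl d' -> pl G d = pl G d'.
Proof. destruct d, d'; simpl; intro h; try discriminate; injection h as ->; reflexivity. Qed.

Definition initial_lbl (l : ev A + ev B) : Prop :=
  match l with inl a => minimal A a | inr _ => False end.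

Lemma initial_move_iff (d : sev (game A B)) :
  (exists al, d = inl al /\ minimal (esp_of (dual (bang A))) al) <-> initial_lbl (game_lbl d).
Proof.
  destruct d as [al|be]; simpl.
  - rewrite <- (bang_minimal_iff (proj1 HA)). split; [intros [al' [[= <-] H]]; exact H|eauto].
  - split; [intros [al [[=] _]]|intros []].
Qed.

Lemma initial_not_imm (d d' : sev (game A B)) : initial_lbl (game_lbl d) -> ~ imm G d' d.
Proof.
  intros Hinit [[Hle Hne] _]. destruct d as [al|be]; [|destruct Hinit].
  destruct d' as [al'|be']; [|destruct Hle].
  apply Hne. f_equal. apply (bang_minimal_iff (proj1 HA)); [exact Hinit|exact Hle].
Qed.

End Game.

Section Strategy.
Context {A B : esp} {T : essp}.
Variable sigma : sev T -> sev (game A B).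
Hypothesis HA : is_arena A.
Hypothesis HB : is_arena B.
Hypothesis HT : is_essp T.
Hypothesis Hstr : strategy T (game A B) sigma.
Hypothesis Hneg : negative T.
Hypothesis Hdet : deterministic T.
Hypothesis Hseq : sequential_innocent T.
Notation E := (esp_of T).
Notation G := (esp_of (game A B)).

Lemma sigma_local_inj {x a b} : config E x -> x a -> x b -> sigma a = sigma b -> a = b.
Proof. destruct Hstr as [[_ [h _]] _]. apply h. Qed.

Lemma pl_sigma a : pl G (sigma a) = pl E a.
Proof. destruct Hstr as [[_ [_ [h _]]] _]. apply h. Qed.

Lemma sigma_chain_down {s n c} : chain T s n c -> forall i d, i <= n ->
  le G d (sigma (c i)) -> exists j, j <= i /\ sigma (c j) = d.
Proof.
  intros Hc i d Hi Hd. destruct Hstr as [[Himg _] _].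
  destruct (Himg _ (config_cause HT Hdet (c i))) as [_ [Hdown _]].
  destruct (Hdown d (sigma (c i))) as [a [Ha <-]]; [|exact Hd|].
  - exists (c i). split; [apply (es_le_refl (proj1 HT))|reflexivity].
  - apply (chain_cause (proj1 HT) Hc i a Hi) in Ha as [j [Hj <-]]. eauto.
Qed.

Lemma sigma_chain_inj {s n c} : chain T s n c -> forall i j, i <= n -> j <= n ->
  sigma (c i) = sigma (c j) -> i = j.
Proof.
  intros Hc i j Hi Hj Heq. apply (chain_inj (proj1 HT) Hc); auto.
  apply (sigma_local_inj (config_cause HT Hdet s)); auto; apply (chain_le_top Hc); auto.
Qed.

Definition chain_link (c : nat -> sev T) (n m i : nat) : Prop :=
  m <= n /\ i <= n /\ imm G (sigma (c m)) (sigma (c i)).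

Lemma sigma_chain_le_iff {s n c} : chain T s n c -> forall i j, i <= n -> j <= n ->
  (le G (sigma (c j)) (sigma (c i)) <-> clos_refl_trans nat (chain_link c n) j i).
Proof.
  intros Hc i j Hi Hj. split.
  - revert j Hj. induction i as [i IH] using lt_wf_ind. intros j Hj Hle.
    destruct (classic (sigma (c j) = sigma (c i))) as [Heq|Hne].
    { rewrite (sigma_chain_inj Hc j i Hj Hi Heq). apply rt_refl. }
    assert (Hji : j <= i).
    { destruct (sigma_chain_down Hc i _ Hi Hle) as [j' [Hj' Heq]].
      rewrite <- (sigma_chain_inj Hc j' j ltac:(lia) Hj Heq). exact Hj'. }
    set (between := fun m => le G (sigma (c j)) (sigma (c m)) /\
                             le G (sigma (c m)) (sigma (c i)) /\ sigma (c m) <> sigma (c i)).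
    (* the largest index [m] with [sigma (c j) <= sigma (c m) < sigma (c i)] is a covering step *)
    destruct (nat_bounded_max between i j) as [m [[Hjm [Hmi Hne']] [Hmi' Hmax]]];
      [split; [apply game_le_refl; auto|auto]|exact Hji|].
    assert (m <> i) by (intros ->; auto).
    apply rt_trans with m; [apply IH; auto; lia|apply rt_step].
    split; [lia|split; [exact Hi|]]. split; [split; auto|].
    intros [w [[Hmw Hmw'] [Hwi Hwi']]].
    destruct (sigma_chain_down Hc i w Hi Hwi) as [q [Hq <-]].
    destruct (sigma_chain_down Hc q (sigma (c m)) ltac:(lia) Hmw) as [q' [Hq' Hqe]].
    apply (sigma_chain_inj Hc q' m ltac:(lia) ltac:(lia)) in Hqe. subst q'.
    assert (q <= m) by (apply Hmax; [repeat split; auto; eapply game_le_trans; eauto|lia]).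
    apply Hmw'. do 2 f_equal. lia.
  - clear Hi Hj. induction 1 as [m i [_ [_ [[Hmi _] _]]]| |j m i _ IHjm _ IHmi];
      auto using game_le_refl.
    apply (game_le_trans HA HB _ _ _ IHjm IHmi).
Qed.

Lemma sigma_chain_imm_iff {s n c} : chain T s n c -> forall m i, m <= n -> i <= n ->
  (imm G (sigma (c m)) (sigma (c i)) <->
   le G (sigma (c m)) (sigma (c i)) /\ m <> i /\
   ~ exists q, q <= n /\ le G (sigma (c m)) (sigma (c q)) /\ m <> q /\
               le G (sigma (c q)) (sigma (c i)) /\ q <> i).
Proof.
  intros Hc m i Hm Hi. split.
  - intros [[Hle Hne] Hnone]. split; [exact Hle|split; [intros ->; auto|]].
    intros [q [Hq [Hmq [Hmq' [Hqi Hqi']]]]]. apply Hnone. exists (sigma (c q)).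
    split; split; auto; intro Heq; [apply Hmq'|apply Hqi']; eapply sigma_chain_inj; eauto.
  - intros [Hle [Hne Hnone]].
    split; [split; auto; intro Heq; apply Hne; eapply sigma_chain_inj; eauto|].
    intros [w [[Hmw Hmw'] [Hwi Hwi']]]. destruct (sigma_chain_down Hc i w Hi Hwi) as [q [Hq <-]].
    apply Hnone. exists q. repeat split; auto; try lia; intros ->; auto.
Qed.

Lemma points_iff (c : nat -> sev T) i j :
  points T sigma c i j <->
  imm G (sigma (c j)) (sigma (c i)) \/ (j = 0 /\ initial_lbl (game_lbl (sigma (c i)))).
Proof. unfold points. rewrite <- (initial_move_iff HA). reflexivity. Qed.


Section Pair.
Variables (s s' : sev T) (n : nat) (c c' : nat -> sev T).
Hypothesis Hc : chain T s n c.
Hypothesis Hc' : chain T s' n c'.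

Definition same_moves : Prop :=
  (forall i, i <= n -> game_lbl (sigma (c i)) = game_lbl (sigma (c' i))) /\
  (forall m i, m <= n -> i <= n ->
     (imm G (sigma (c m)) (sigma (c i)) <-> imm G (sigma (c' m)) (sigma (c' i)))).

Lemma same_moves_le : same_moves -> forall i j, i <= n -> j <= n ->
  (le G (sigma (c j)) (sigma (c i)) <-> le G (sigma (c' j)) (sigma (c' i))).
Proof.
  intros [_ Himm] i j Hi Hj. rewrite (sigma_chain_le_iff Hc), (sigma_chain_le_iff Hc'); auto.
  assert (Hlink : rel_eq (chain_link c n) (chain_link c' n)).
  { intros m i'. unfold chain_link. split; intros [Hm [Hi' Hmi]]; repeat split; auto;
      apply (Himm m i' Hm Hi'); exact Hmi. }
  split; intro Hclos.
  - exact (rel_eq_transport (fun R => clos_refl_trans nat R j i) Hclos Hlink).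
  - refine (rel_eq_transport (fun R => clos_refl_trans nat R j i) Hclos _).
    intros a b. symmetry. apply Hlink.
Qed.

Lemma imm_agree_of_le_agree : (forall i j, i <= n -> j <= n ->
  (le G (sigma (c j)) (sigma (c i)) <-> le G (sigma (c' j)) (sigma (c' i)))) ->
  forall m i, m <= n -> i <= n ->
  (imm G (sigma (c m)) (sigma (c i)) <-> imm G (sigma (c' m)) (sigma (c' i))).
Proof.
  intros Hle m i Hm Hi. rewrite (sigma_chain_imm_iff Hc), (sigma_chain_imm_iff Hc'); auto.
  split; intros [Hmi [Hne Hnone]]; (split; [apply Hle; auto|split; [exact Hne|]]);
    intros [q [Hq [Hmq [Hmq' [Hqi Hqi']]]]]; apply Hnone; exists q;
    repeat split; auto; apply Hle; auto.
Qed.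

Lemma map_iso_same_moves (th : sev T -> sev T -> Prop) :
  (forall i, i <= n -> th (c i) (c' i)) -> iso (game A B) (img sigma th) -> same_moves.
Proof.
  intros Hth [Hside [[xA [yA [_ [HlA HoA]]]] [xB [yB [_ [HlB HoB]]]]]].
  assert (Hpair : forall i, i <= n -> img sigma th (sigma (c i)) (sigma (c' i))).
  { intros i Hi. exists (c i), (c' i). auto. }
  assert (Hle : forall i j, i <= n -> j <= n ->
     (le G (sigma (c j)) (sigma (c i)) <-> le G (sigma (c' j)) (sigma (c' i)))).
  { intros i j Hi Hj. pose proof (Hpair i Hi) as Pi. pose proof (Hpair j Hj) as Pj.
    pose proof (Hside _ _ Pi) as Si. pose proof (Hside _ _ Pj) as Sj.
    destruct (sigma (c i)), (sigma (c' i)); try destruct Si;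
    destruct (sigma (c j)), (sigma (c' j)); try destruct Sj; simpl; try tauto.
    - exact (HoA _ _ _ _ Pj Pi).
    - exact (HoB _ _ _ _ Pj Pi). }
  split; [|exact (imm_agree_of_le_agree Hle)].
  intros i Hi. pose proof (Hpair i Hi) as Pi. pose proof (Hside _ _ Pi) as Si.
  destruct (sigma (c i)), (sigma (c' i)); try destruct Si; simpl; f_equal.
  - exact (HlA _ _ Pi).
  - exact (HlB _ _ Pi).
Qed.

Lemma same_moves_points : same_moves -> forall i j, i <= n -> j <= n ->
  (points T sigma c i j <-> points T sigma c' i j).
Proof.
  intros [Hlbl Himm] i j Hi Hj. now rewrite !points_iff, (Himm j i Hj Hi), (Hlbl i Hi).
Qed.

Lemma points_same_moves :
  (forall i, i <= n -> game_lbl (sigma (c i)) = game_lbl (sigma (c' i))) ->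
  (forall i j, i <= n -> j <= n -> (points T sigma c i j <-> points T sigma c' i j)) ->
  same_moves.
Proof.
  intros Hlbl Hpts. split; [exact Hlbl|]. intros m i Hm Hi.
  pose proof (Hpts i m Hi Hm) as Hp. rewrite !points_iff, <- (Hlbl i Hi) in Hp.
  destruct (classic (initial_lbl (game_lbl (sigma (c i))))) as [Hinit|Hninit]; [|tauto].
  split; intro Himm; exfalso.
  - exact (initial_not_imm HA _ _ Hinit Himm).
  - rewrite (Hlbl i Hi) in Hinit. exact (initial_not_imm HA _ _ Hinit Himm).
Qed.

Definition chain_prefix (k : nat) : sev T -> sev T -> Prop :=
  fun a b => exists j, j < k /\ a = c j /\ b = c' j.

Lemma img_chain_prefix_iff k d d' : img sigma (chain_prefix k) d d' <->
  exists j, j < k /\ d = sigma (c j) /\ d' = sigma (c' j).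
Proof.
  split.
  - intros [a [b [[j [Hj [-> ->]]] [<- <-]]]]. eauto.
  - intros [j [Hj [-> ->]]]. exists (c j), (c' j). split; [exists j|]; auto.
Qed.

Section Component.
Context {X : esp}.
Hypothesis HX : is_arena X.
Variable inj : bang_ev X -> sev (game A B).
Hypothesis inj_le : forall al be, le G (inj al) (inj be) <-> bang_le al be.
Hypothesis inj_lbl_closed : forall al d, game_lbl (inj al) = game_lbl d -> exists be, d = inj be.
Hypothesis inj_lbl : forall al be, game_lbl (inj al) = game_lbl (inj be) -> lbl al = lbl be.
Hypothesis inj_injective : forall al be, inj al = inj be -> al = be.

Lemma inj_fiber_finite (d : sev (game A B)) : exists l, forall al, d = inj al <-> In al l.
Proof.
  destruct (classic (exists al, d = inj al)) as [[al0 ->]|Hnone].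
  - exists [al0]. intro al. simpl. split; [intro Heq; left; symmetry; auto|intros [->|[]]; auto].
  - exists []. intro al. simpl. split; [intros ->; eauto|intros []].
Qed.

Lemma component_config {t m cc} : chain T t m cc -> forall k,
  config (bang_esp X) (fun al => exists j, j < k /\ j <= m /\ sigma (cc j) = inj al).
Proof.
  intros Hcc k. split; [|split].
  - induction k as [|k [l Hl]].
    + exists []. intro al. simpl. split; [intros [j [Hj _]]; lia|intros []].
    + destruct (inj_fiber_finite (sigma (cc k))) as [lk Hlk].
      destruct (le_lt_dec k m) as [Hkm|Hmk].
      * exists (l ++ lk). intro al. rewrite in_app_iff, <- Hl, <- Hlk. split.
        -- intros [j [Hj [Hjm He]]]. destruct (Nat.eq_dec j k) as [->|Hjk]; [now right|].
           left. exists j. repeat split; auto; lia.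
        -- intros [[j [Hj [Hjm He]]]|He]; [exists j; repeat split; auto; lia|eauto].
      * exists l. intro al. rewrite <- Hl. split; intros [j [Hj [Hjm He]]];
          exists j; repeat split; auto; lia.
  - intros al be [j [Hj [Hjm Hbe]]] Hle. apply inj_le in Hle. rewrite <- Hbe in Hle.
    destruct (sigma_chain_down Hcc j _ Hjm Hle) as [q [Hq He]]. exists q. repeat split; auto; lia.
  - intros l _. destruct HX as [_ [_ [_ [Hcon _]]]]. apply Hcon.
Qed.

Lemma component_iso : same_moves -> forall k, k <= S n ->
  iso (bang X) (fun al be => img sigma (chain_prefix k) (inj al) (inj be)).
Proof.
  intros [Hlbl Himm] k Hk.
  exists (fun al => exists j, j < k /\ j <= n /\ sigma (c j) = inj al),
         (fun al => exists j, j < k /\ j <= n /\ sigma (c' j) = inj al).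
  split; [split; [|split]|split].
  - exact (component_config Hc k).
  - exact (component_config Hc' k).
  - split; [|split; [|split; [|split]]].
    + intros al be [j [Hj [He He']]]%img_chain_prefix_iff. split; exists j; repeat split; auto; lia.
    + intros al [j [Hj [Hjn He]]]. pose proof (Hlbl j Hjn) as Hl. rewrite He in Hl.
      destruct (inj_lbl_closed _ _ Hl) as [be Hbe]. exists be.
      apply img_chain_prefix_iff. eauto.
    + intros be [j [Hj [Hjn He]]]. pose proof (Hlbl j Hjn) as Hl. rewrite He in Hl.
      destruct (inj_lbl_closed _ _ (eq_sym Hl)) as [al Hal]. exists al.
      apply img_chain_prefix_iff. eauto.
    + intros al be be' [j [Hj [He1 He2]]]%img_chain_prefix_iff
        [j' [Hj' [He1' He2']]]%img_chain_prefix_iff.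
      rewrite He1 in He1'. apply (sigma_chain_inj Hc) in He1'; try lia. subst j'.
      apply inj_injective. congruence.
    + intros al al' be [j [Hj [He1 He2]]]%img_chain_prefix_iff
        [j' [Hj' [He1' He2']]]%img_chain_prefix_iff.
      rewrite He2 in He2'. apply (sigma_chain_inj Hc') in He2'; try lia. subst j'.
      apply inj_injective. congruence.
  - intros al be [j [Hj [He1 He2]]]%img_chain_prefix_iff.
    apply inj_lbl. rewrite He1, He2. apply Hlbl. lia.
  - intros al al' be be' [j [Hj [He1 He2]]]%img_chain_prefix_iff
      [j' [Hj' [He1' He2']]]%img_chain_prefix_iff.
    rewrite <- !inj_le, He1, He2, He1', He2'. apply same_moves_le; [split; auto|lia|lia].
Qed.

End Component.

Lemma game_iso_prefix : same_moves -> forall k, k <= S n ->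
  iso (game A B) (img sigma (chain_prefix k)).
Proof.
  intros Hsame k Hk. split; [|split].
  - intros d d' [j [Hj [-> ->]]]%img_chain_prefix_iff.
    pose proof (proj1 Hsame j ltac:(lia)) as Hl.
    destruct (sigma (c j)), (sigma (c' j)); simpl in Hl; try discriminate; exact I.
  - apply (component_iso HA (fun al => inl al)); auto.
    + reflexivity.
    + intros al [d|d] Hl; simpl in Hl; [eauto|discriminate].
    + intros al be Hl. simpl in Hl. congruence.
    + congruence.
  - apply (component_iso HB (fun be => inr be)); auto.
    + reflexivity.
    + intros be [d|d] Hl; simpl in Hl; [discriminate|eauto].
    + intros al be Hl. simpl in Hl. congruence.
    + congruence.
Qed.


Lemma prefix_iso_step_neg : same_moves -> forall k, k <= n -> iso T (chain_prefix k) ->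
  pl E (c k) = Neg -> iso T (chain_prefix (S k)).
Proof.
  intros Hsame k Hk Hpre Hpol. destruct Hstr as [_ [_ [Hrec _]]].
  destruct (Hrec (chain_prefix k) (img sigma (chain_prefix (S k))) Hpre
              (game_iso_prefix Hsame (S k) ltac:(lia))) as [[th' [Hth' [Hincl Himg]]] _].
  { split.
    - intros d d' [j [Hj [-> ->]]]%img_chain_prefix_iff.
      apply img_chain_prefix_iff. exists j. repeat split; auto; lia.
    - intros d d' [j [Hj [-> ->]]]%img_chain_prefix_iff Hnew.
      destruct (Nat.eq_dec j k) as [->|Hjk]; [now rewrite pl_sigma|].
      exfalso. apply Hnew, img_chain_prefix_iff. exists j. repeat split; auto; lia. }
  destruct HT as [_ [[Hbij _] _]]. destruct (Hbij _ Hth') as [x [y [Cx [Cy Hxy]]]].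
  assert (Hth'_chain : forall a b, th' a b -> exists j, j <= k /\ a = c j /\ b = c' j).
  { intros a b Hab.
    assert (Hab' : img sigma th' (sigma a) (sigma b)) by (exists a, b; auto).
    apply Himg, img_chain_prefix_iff in Hab' as [j [Hj [Ea Eb]]].
    destruct (proj1 Hxy a b Hab) as [Hxa Hyb]. exists j. split; [lia|split].
    - apply (sigma_local_inj (config_union Hdet Cx (config_cause HT Hdet s))); auto.
      right. apply (chain_le_top Hc). lia.
    - apply (sigma_local_inj (config_union Hdet Cy (config_cause HT Hdet s'))); auto.
      right. apply (chain_le_top Hc'). lia. }
  apply (rel_eq_transport (iso T) Hth'). intros a b. split.
  - intros Hab. destruct (Hth'_chain a b Hab) as [j [Hj [-> ->]]]. exists j. split; auto; lia.
  - intros [j [Hj [-> ->]]]. destruct (Nat.eq_dec j k) as [->|Hjk].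
    + assert (Hk' : img sigma (chain_prefix (S k)) (sigma (c k)) (sigma (c' k)))
        by (apply img_chain_prefix_iff; eauto).
      apply Himg in Hk' as [a [b [Hab [Ea _]]]].
      destruct (Hth'_chain a b Hab) as [j [Hj' [-> ->]]].
      apply (sigma_chain_inj Hc) in Ea; [subst j; exact Hab|lia|lia].
    + apply Hincl. exists j. split; auto; lia.
Qed.

Lemma prefix_extension_imm k th' u : k < n -> iso T th' ->
  (forall j, j <= k -> th' (c j) (c' j)) ->
  (forall a, dom th' a <-> le E a (c (S k))) -> th' (c (S k)) u -> imm E (c' k) u.
Proof.
  intros Hk Hth' Hpre Hdom Hu.
  destruct HT as [HE [[Hbij [_ [Hinv _]]] _]].
  destruct (Hbij _ Hth') as [x [y [_ [[_ [Dy _]] [Hxy [_ [Hsurj [Hfun Hinj]]]]]]]].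
  split; [split|].
  - apply (iso_le HT Hdet Hth' (c (S k)) u (c k) (c' k) Hu (Hpre k (le_n k))).
    apply (chain_le HE Hc); lia.
  - intros Heq. rewrite <- Heq in Hu. pose proof (Hinj _ _ _ Hu (Hpre k (le_n k))) as Hck.
    apply (chain_inj HE Hc) in Hck; lia.
  - intros [w [[Hkw Hkw'] [Hwu Hwu']]].
    destruct (Hsurj w) as [a Ha]; [apply (Dy w u); [apply (Hxy _ _ Hu)|exact Hwu]|].
    destruct (proj1 (chain_cause HE Hc (S k) a ltac:(lia)) (proj1 (Hdom a) (ex_intro _ w Ha)))
      as [j [Hj <-]].
    assert (Hkj : le E (c k) (c j)).
    { apply (iso_le HT Hdet (Hinv _ Hth') w (c j) (c' k) (c k)); auto. exact (Hpre k (le_n k)). }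
    apply (chain_le_iff HE Hc) in Hkj; try lia.
    destruct (Nat.eq_dec j k) as [->|Hjk].
    + apply Hkw'. exact (Hfun _ _ _ (Hpre k (le_n k)) Ha).
    + replace j with (S k) in Ha by lia. apply Hwu'. exact (Hfun _ _ _ Ha Hu).
Qed.

Lemma prefix_iso_step_pos : same_moves -> forall k, k <= n -> iso T (chain_prefix k) ->
  pl E (c k) = Pos -> iso T (chain_prefix (S k)).
Proof.
  intros Hsame k Hk Hpre Hpol.
  destruct HT as [HE [[Hbij [_ [_ [_ [_ Hext]]]]] _]].
  destruct k as [|k].
  { exfalso. enough (pl E (c 0) = Neg) by congruence. apply Hneg.
    intros b Hb. apply (chain_cause HE Hc 0 b (Nat.le_0_l n)) in Hb as [j [Hj <-]].
    f_equal. lia. }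
  assert (Hpre_in : forall j, j <= k -> chain_prefix (S k) (c j) (c' j))
    by (intros j Hj; exists j; auto with arith).
  destruct (Hbij _ Hpre) as [x [y [Cx [Cy Hxy]]]].
  destruct (Hext _ x y (cause E (c (S k))) Hpre (conj Cx (conj Cy Hxy)) (config_cause HT Hdet _))
    as [th' [Hth' [Hincl Hdom]]].
  { intros a Ha. destruct (proj1 (proj2 Hxy) a Ha) as [b [j [Hj [-> ->]]]].
    apply (chain_le HE Hc); lia. }
  destruct (proj2 (Hdom (c (S k))) (es_le_refl HE _)) as [u Hu].
  assert (Hth'_pre : forall j, j <= k -> th' (c j) (c' j)) by (intros; apply Hincl, Hpre_in; auto).
  pose proof (prefix_extension_imm k th' u Hk Hth' Hth'_pre Hdom Hu) as Hku.
  assert (Hkc' : imm E (c' k) (c' (S k))) by (apply (proj1 (proj2 Hc')); lia).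
  assert (u = c' (S k)) as ->.
  { destruct (classic (u = c' (S k))) as [|Hne]; auto. exfalso.
    apply (proj2 Hseq (c' k) u (c' (S k)) Hku Hkc'); auto.
    - rewrite <- (iso_pol HT _ _ _ Hth' Hu). exact Hpol.
    - rewrite <- pl_sigma, <- (pl_game_lbl _ _ (proj1 Hsame (S k) Hk)), pl_sigma. exact Hpol.
    - exact (config_union Hdet (config_cause HT Hdet u) (config_cause HT Hdet _)). }
  destruct (Hbij _ Hth') as [_ [_ [_ [_ [_ [_ [_ [Hfun _]]]]]]]].
  apply (rel_eq_transport (iso T) Hth'). intros a b. split.
  - intros Hab. destruct (proj1 (chain_cause HE Hc (S k) a Hk) (proj1 (Hdom a) (ex_intro _ b Hab)))
      as [j [Hj <-]].
    exists j. split; [lia|split; [reflexivity|]].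
    destruct (Nat.eq_dec j (S k)) as [->|Hjk]; [exact (Hfun _ _ _ Hab Hu)|].
    apply (Hfun _ _ _ Hab), Hth'_pre. lia.
  - intros [j [Hj [-> ->]]]. destruct (Nat.eq_dec j (S k)) as [->|Hjk]; [exact Hu|].
    apply Hth'_pre. lia.
Qed.

Lemma prefix_iso : same_moves -> forall k, k <= S n -> iso T (chain_prefix k).
Proof.
  intros Hsame. induction k as [|k IH]; intros Hk.
  - apply (rel_eq_transport (iso T) (iso_empty HT Hdet)). intros a b.
    split; [intros []|intros [j [Hj _]]; lia].
  - destruct (pl E (c k)) eqn:Hpol.
    + apply prefix_iso_step_pos; auto; [lia|apply IH; lia].
    + apply prefix_iso_step_neg; auto; [lia|apply IH; lia].
Qed.

Lemma same_moves_iso (th : sev T -> sev T -> Prop) :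
  order_iso E th (cause E s) (cause E s') -> same_moves -> iso T th.
Proof.
  intros Hth Hsame. apply (rel_eq_transport (iso T) (prefix_iso Hsame (S n) (le_n _))).
  pose proof (chain_order_iso (proj1 HT) th Hc Hc' Hth) as Hth_chain.
  intros a b. split.
  - intros [j [Hj [-> ->]]]. apply Hth_chain. lia.
  - intros Hab. destruct Hth as [[Hdom [_ [_ [Hfun _]]]] _].
    destruct (proj1 (proj2 (proj2 Hc) a) (proj1 (Hdom a b Hab))) as [j [Hj <-]].
    exists j. split; [lia|split; [reflexivity|]]. exact (Hfun _ _ _ Hab (Hth_chain j Hj)).
Qed.

Lemma same_moves_common_pointing_seq : same_moves ->
  exists p, pointing_seq T sigma s p /\ pointing_seq T sigma s' p.
Proof.
  intros Hsame.
  exists (map (fun i => game_lbl (sigma (c i))) (seq 0 (S n)),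
          fun i j => i <= n /\ j <= n /\ points T sigma c i j).
  split; exists n.
  - exists c. split; [exact Hc|split; [reflexivity|intros i j; apply iff_refl]].
  - exists c'. split; [exact Hc'|split].
    + apply map_ext_in. intros i Hi. apply in_seq in Hi. apply (proj1 Hsame). lia.
    + intros i j. cbn [snd]. split; intros [Hi [Hj Hp]]; repeat split; auto;
        apply (same_moves_points Hsame i j Hi Hj); exact Hp.
Qed.

End Pair.

Lemma common_pointing_seq_iso (s s' : sev T) (p : pseq A B) (th : sev T -> sev T -> Prop) :
  pointing_seq T sigma s p -> pointing_seq T sigma s' p ->
  order_iso E th (cause E s) (cause E s') -> iso T th.
Proof.
  intros [n [c [Hc [Hlbl Hpts]]]] [n' [c' [Hc' [Hlbl' Hpts']]]] Hth.
  assert (n' = n) as ->.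
  { apply (f_equal (@length _)) in Hlbl. apply (f_equal (@length _)) in Hlbl'.
    rewrite !length_map, !length_seq in *. congruence. }
  apply (same_moves_iso _ _ _ _ _ Hc Hc' th Hth), points_same_moves.
  - intros i Hi. rewrite Hlbl in Hlbl'. apply (proj1 map_ext_in_iff Hlbl'), in_seq. lia.
  - intros i j Hi Hj. pose proof (Hpts i j). pose proof (Hpts' i j). tauto.
Qed.

End Strategy.

Theorem mainTheorem14 :
  forall (A B : esp) (S : essp) (sigma : sev S -> sev (game A B)),
    is_arena A -> is_arena B -> is_essp S ->
    @strategy S (game A B) sigma -> negative S -> deterministic S ->
    sequential_innocent S ->
    forall (s s' : sev S) (n : nat),
      @cause_card S s n -> @cause_card S s' n ->
      forall theta : sev S -> sev S -> Prop,
        @order_iso (esp_of S) theta (cause (esp_of S) s) (cause (esp_of S) s') ->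
        ((exists p : pseq A B,
             @pointing_seq A B S sigma s p /\ @pointing_seq A B S sigma s' p)
           <-> iso S theta) /\
        (iso S theta <-> iso (game A B) (img sigma theta)).
Proof.
  intros A B S sigma HA HB HS Hstr Hneg Hdet Hseq s s' n Hcs Hcs' theta Hth.
  destruct (cause_card_succ (proj1 HS) Hcs) as [m ->].
  destruct (chain_exists (proj1 HS) (proj1 Hseq) m s Hcs) as [c Hc].
  destruct (chain_exists (proj1 HS) (proj1 Hseq) m s' Hcs') as [c' Hc'].
  assert (Hmap : iso S theta -> iso (game A B) (img sigma theta))
    by (destruct Hstr as [[_ [_ [_ Hiso]]] _]; apply Hiso).
  assert (Hsame : iso (game A B) (img sigma theta) -> same_moves sigma m c c').
  { apply (map_iso_same_moves sigma HS Hstr Hdet s s' m c c' Hc Hc').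
    exact (chain_order_iso (proj1 HS) theta Hc Hc' Hth). }
  split; split.
  - intros [p [Hp Hp']]. exact (common_pointing_seq_iso sigma HA HB HS Hstr Hneg Hdet Hseq
                                  s s' p theta Hp Hp' Hth).
  - intros Hiso. exact (same_moves_common_pointing_seq sigma HA s s' m c c' Hc Hc'
                          (Hsame (Hmap Hiso))).
  - exact Hmap.
  - intros Hiso. exact (same_moves_iso sigma HA HB HS Hstr Hneg Hdet Hseq s s' m c c' Hc Hc'
                          theta Hth (Hsame Hiso)).
Qed.
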